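(* Let $\Gamma$ be a groupoid over a set $X$ and let $K:\Gamma\times\Gamma\to\mathbb{C}$ be a positive definite kernel such that $K(\gamma,\chi)=0$ whenever $r(\gamma)\neq r(\chi)$ and $K(\chi,\gamma)=K(\gamma^{-1}\chi,\varepsilon(r(\gamma^{-1}\chi)))$ whenever $r(\gamma)=r(\chi)$. For $x\in X$ let $K^x$ be the restriction of $K$ to $\Gamma^x\times\Gamma^x$ and $H(K^x)$ its reproducing kernel Hilbert space, with $K_\chi:=K^{r(\chi)}(\cdot,\chi)$. Then for each $\gamma\in\Gamma$ there is a unique unitary operator $\mathcal{U}(\gamma):H(K^{s(\gamma)})\to H(K^{r(\gamma)})$ with $\mathcal{U}(\gamma)K_\chi=K_{\gamma\chi}$ for all $\chi\in\Gamma^{s(\gamma)}$; $(\mathcal{U},\{H(K^x)\}_{x\in X})$ is a unitary representation of $\Gamma$; and with the vector field $v(x):=K_{\varepsilon(x)}\in H(K^x)$ one has, for all $\gamma,\chi\in\Gamma$ with $r(\gamma)=r(\chi)$, $K(\chi,\gamma)=\langle\mathcal{U}(\gamma)v(s(\gamma)),\mathcal{U}(\chi)v(s(\chi))\rangle_{H(K^{r(\gamma)})}$.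
   Context: A groupoid over $X$ consists of sets $\Gamma,X$, surjective maps $s,r:\Gamma\to X$, an associative multiplication $\gamma_1\gamma_2$ defined when $r(\gamma_2)=s(\gamma_1)$ (with $s(\gamma_1\gamma_2)=s(\gamma_2)$, $r(\gamma_1\gamma_2)=r(\gamma_1)$), an embedding $\varepsilon:X\to\Gamma$ with $\varepsilon(r(\gamma))\gamma=\gamma=\gamma\varepsilon(s(\gamma))$, and an inversion with $\gamma^{-1}\gamma=\varepsilon(s(\gamma))$, $\gamma\gamma^{-1}=\varepsilon(r(\gamma))$. $\Gamma^x:=r^{-1}(x)$. A unitary representation $(\mathcal{U},\{H_x\}_{x\in X})$ of $\Gamma$ consists of Hilbert spaces $H_x$ and unitaries $\mathcal{U}(\gamma):H_{s(\gamma)}\to H_{r(\gamma)}$ with $\mathcal{U}(\gamma_1\gamma_2)=\mathcal{U}(\gamma_1)\mathcal{U}(\gamma_2)$ whenever defined. Inner products are antilinear in the second argument. A kernel $K$ on a set $A$ is positive definite if $\sum_{k,l}\lambda_kK(a_k,a_l)\bar\lambda_l\ge0$ for all finite choices of $a_k\in A$, $\lambda_k\in\mathbb{C}$; its reproducing kernel Hilbert space $H(K)$ is the unique Hilbert space of functions on $A$ containing all $K(\cdot,a)$ with $f(a)=\langle f,K(\cdot,a)\rangle$ for all $f$, equal to the completion of $\mathrm{span}\{K(\cdot,a)\}_{a\in A}$, so that $K(b,a)=\langle K(\cdot,a),K(\cdot,b)\rangle$. *)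

From mathcomp Require Import all_boot all_order all_algebra.
From mathcomp Require Import reals complex.
Set Implicit Arguments. Unset Strict Implicit. Unset Printing Implicit Defensive.
Import Order.TTheory GRing.Theory Num.Theory.
Local Open Scope ring_scope.

(* Multiplication is a total function; its value is only constrained
   (and only ever used) when it is defined, i.e. r g2 = s g1. *)
Record groupoid := Groupoid {
  gel : Type;
  gob : Type;
  gs : gel -> gob;
  gr : gel -> gob;
  gmul : gel -> gel -> gel;
  geps : gob -> gel;
  ginv : gel -> gel;
  gs_surj : forall x, exists g, gs g = x;
  gr_surj : forall x, exists g, gr g = x;
  gs_mul : forall g1 g2, gr g2 = gs g1 -> gs (gmul g1 g2) = gs g2;
  gr_mul : forall g1 g2, gr g2 = gs g1 -> gr (gmul g1 g2) = gr g1;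
  gmulA : forall g1 g2 g3, gr g2 = gs g1 -> gr g3 = gs g2 ->
            gmul g1 (gmul g2 g3) = gmul (gmul g1 g2) g3;
  geps_inj : forall x y, geps x = geps y -> x = y;
  gs_eps : forall x, gs (geps x) = x;
  gr_eps : forall x, gr (geps x) = x;
  geps_mull : forall g, gmul (geps (gr g)) g = g;
  geps_mulr : forall g, gmul g (geps (gs g)) = g;
  gs_inv : forall g, gs (ginv g) = gr g;
  gr_inv : forall g, gr (ginv g) = gs g;
  gmulVg : forall g, gmul (ginv g) g = geps (gs g);
  gmulgV : forall g, gmul g (ginv g) = geps (gr g)
}.

Definition fiber (G : groupoid) (x : gob G) := { g : gel G | gr g = x }.

Definition fmul (G : groupoid) (g : gel G) (c : fiber (gs g)) : fiber (gr g) :=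
  exist _ (gmul g (proj1_sig c))
        (@gr_mul G g (proj1_sig c) (proj2_sig c)).

Definition feps (G : groupoid) (x : gob G) : fiber x := exist _ (geps x) (gr_eps x).

Definition ftr (G : groupoid) (C : Type) (x y : gob G) (e : x = y)
  (f : fiber x -> C) : fiber y -> C := eq_rect x (fun z => fiber z -> C) f y e.

Lemma gs_mul_sym (G : groupoid) (g1 g2 : gel G) (h : gr g2 = gs g1) :
  gs g2 = gs (gmul g1 g2).
Proof. by rewrite gs_mul. Qed.

Lemma gr_mul_sym (G : groupoid) (g1 g2 : gel G) (h : gr g2 = gs g1) :
  gr g1 = gr (gmul g1 g2).
Proof. by rewrite gr_mul. Qed.

Section Hilbert.
Variable R : realType.
Local Notation C := R[i].
Variable A : Type.

Definition fzero : A -> C := fun _ => 0.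
Definition fadd (f g : A -> C) : A -> C := fun a => f a + g a.
Definition fscale (c : C) (f : A -> C) : A -> C := fun a => c * f a.
Definition fsub (f g : A -> C) : A -> C := fun a => f a - g a.

Definition pos_def_kernel (K : A -> A -> C) : Prop :=
  forall (n : nat) (a : 'I_n -> A) (lam : 'I_n -> C),
    0 <= \sum_(k < n) \sum_(l < n) lam k * K (a k) (a l) * (lam l)^*.

Definition hilbert_space (H : (A -> C) -> Prop) (ip : (A -> C) -> (A -> C) -> C)
  : Prop :=
  [/\ H fzero,
      (forall f g, H f -> H g -> H (fadd f g)) &
      (forall c f, H f -> H (fscale c f))] /\
  [/\ (forall c f g h, H f -> H g -> H h ->
          ip (fadd (fscale c f) g) h = c * ip f h + ip g h),
      (forall f g, H f -> H g -> ip f g = (ip g f)^*),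
      (forall f, H f -> 0 <= ip f f) &
      (forall f, H f -> ip f f = 0 -> f = fzero)] /\
  (forall u : nat -> A -> C, (forall n, H (u n)) ->
     (forall e : C, 0 < e -> exists N, forall m n, (N <= m)%N -> (N <= n)%N ->
          ip (fsub (u m) (u n)) (fsub (u m) (u n)) < e) ->
     exists f, H f /\
       (forall e : C, 0 < e -> exists N, forall n, (N <= n)%N ->
          ip (fsub (u n) f) (fsub (u n) f) < e)).

(* (H, ip) is the reproducing kernel Hilbert space H(K) of K : a Hilbert
   space of functions on A containing every K(.,a) with f a = <f, K(.,a)>.
   (Such a space is unique, so this characterizes H(K).) *)
Definition is_rkhs (K : A -> A -> C) (H : (A -> C) -> Prop)
  (ip : (A -> C) -> (A -> C) -> C) : Prop :=
  [/\ hilbert_space H ip,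
      (forall a, H (fun b => K b a)) &
      (forall f a, H f -> f a = ip f (fun b => K b a))].

End Hilbert.

Definition unitary (R : realType) (A B : Type)
  (H1 : (A -> R[i]) -> Prop) (ip1 : (A -> R[i]) -> (A -> R[i]) -> R[i])
  (H2 : (B -> R[i]) -> Prop) (ip2 : (B -> R[i]) -> (B -> R[i]) -> R[i])
  (T : (A -> R[i]) -> (B -> R[i])) : Prop :=
  [/\ (forall f, H1 f -> H2 (T f)),
      (forall c f g, H1 f -> H1 g -> T (fadd (fscale c f) g) = fadd (fscale c (T f)) (T g)),
      (forall f g, H1 f -> H1 g -> ip2 (T f) (T g) = ip1 f g) &
      (forall h, H2 h -> exists2 f, H1 f & T f = h)].

Definition Kres (R : realType) (G : groupoid) (K : gel G -> gel G -> R[i])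
  (x : gob G) : fiber x -> fiber x -> R[i] :=
  fun a b => K (proj1_sig a) (proj1_sig b).

Definition Kvec (R : realType) (G : groupoid) (K : gel G -> gel G -> R[i])
  (x : gob G) (c : fiber x) : fiber x -> R[i] := fun a => Kres K a c.
Arguments Kres {R G} K x _ _.

From mathcomp Require Import all_boot all_order all_algebra.
From mathcomp Require Import reals complex.
From mathcomp Require Import boolp classical_sets.
From mathcomp Require Import ring lra.
Import Order.TTheory GRing.Theory Num.Theory.
Local Open Scope ring_scope.

Set Implicit Arguments. Unset Strict Implicit. Unset Printing Implicit Defensive.

(* [U(g)] is left translation: [U(g) f] is [f] precomposed with the bijection
   [chi |-> g^-1 chi] from [Gamma^(r g)] onto [Gamma^(s g)]. The invariance of
   [K] says that pulling [H(K^(s g))] back along this bijection gives a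
   reproducing kernel Hilbert space for [K^(r g)]; since a kernel has only one
   such space, the pull-back is [H(K^(r g))] with the same inner product, so
   [U(g)] is unitary.
   Uniqueness of the RKHS: given [f] in one space, take a sequence minimising
   the distance from [f] to the functions on which both structures agree
   (these include all [K(., a)] and form a subspace). By the parallelogram law
   it is Cauchy in both spaces, hence convergent in both; since evaluation at
   [a] is the inner product with [K(., a)], both limits are pointwise limits,
   and a Cauchy-Schwarz argument shows that the pointwise limit is [f]. So [f]
   lies in the other space, with the same inner products. The remaining
   claims follow from the reproducing property and associativity. *)

Local Notation "x %:C" := (real_complex _ x).

Section Vanishing.
Local Unset Implicit Arguments.
Context {R : realType}.
Implicit Types x y : nat -> R.

Definition vanishing x : Prop :=
  forall e, 0 < e -> exists N, forall n, (N <= n)%N -> x n < e.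

Lemma vanishing_inv : vanishing (fun n => n.+1%:R^-1).
Proof.
move=> e e_gt0; exists (Num.Def.archi_bound e^-1) => n le_Nn.
have einv_ge0 : 0 <= e^-1 by rewrite invr_ge0 ltW.
have le_Nn' : (Num.Def.archi_bound e^-1)%:R <= n%:R :> R by rewrite ler_nat.
have lt_n : n%:R < n.+1%:R :> R by rewrite ltr_nat.
have lt_einv := archi_boundP einv_ge0.
rewrite -[e in _ < e]invrK ltf_pV2 ?posrE ?invr_gt0 ?ltr0n //; lra.
Qed.

Lemma vanishingD {x y} : vanishing x -> vanishing y -> vanishing (fun n => x n + y n).
Proof.
move=> vx vy e e_gt0; have e2_gt0 : 0 < e / 2 by rewrite divr_gt0.
have [N1 hN1] := vx _ e2_gt0; have [N2 hN2] := vy _ e2_gt0.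
exists (maxn N1 N2) => n; rewrite geq_max => /andP[/hN1 ? /hN2 ?]; lra.
Qed.

Lemma vanishingZ {c x} : 0 <= c -> vanishing x -> vanishing (fun n => c * x n).
Proof.
rewrite le_eqVlt => /orP[/eqP <- _ e e_gt0|c_gt0 vx e e_gt0].
  by exists 0%N => n _; rewrite mul0r.
have [N hN] := vx _ (divr_gt0 e_gt0 c_gt0); exists N => n /hN.
by rewrite ltr_pdivlMr // mulrC.
Qed.

Lemma vanishing_le {x y} : vanishing y -> (forall n, x n <= y n) -> vanishing x.
Proof.
by move=> vy le_xy e /vy[N hN]; exists N => n /hN; apply: le_lt_trans.
Qed.

Lemma vanishing_lb {z x} : vanishing x -> (forall n, z <= x n) -> z <= 0.
Proof.
move=> vx lb_z; rewrite leNgt; apply/negP => z_gt0.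
by have [N /(_ N (leqnn N))] := vx _ z_gt0; rewrite ltNge lb_z.
Qed.

End Vanishing.

Section SquaredModulus.
Variable R : realType.
Local Notation C := R[i].
Implicit Types z w : C.

Definition sqmod z : R := complex.Re (z * z^*).

Lemma ge0_complex_real z : 0 <= z -> z = (complex.Re z)%:C.
Proof. by move=> /ger0_real /complex_realP [k ->]. Qed.

Lemma sqmodE z : z * z^* = (sqmod z)%:C.
Proof. by apply: ge0_complex_real; apply: mul_conjC_ge0. Qed.

Lemma sqmod_ge0 z : 0 <= sqmod z.
Proof. by rewrite -ler0c -sqmodE mul_conjC_ge0. Qed.

Lemma sqmod_conj z : sqmod z^* = sqmod z.
Proof. by apply: complexI; rewrite -!sqmodE conjCK mulrC. Qed.

Lemma sqmodN z : sqmod (- z) = sqmod z.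
Proof. by apply: complexI; rewrite -!sqmodE rmorphN /=; ring. Qed.

Lemma sqmodD_le z w : sqmod (z + w) <= 2 * sqmod z + 2 * sqmod w.
Proof.
have parallelogram : sqmod (z + w) + sqmod (z - w) = 2 * sqmod z + 2 * sqmod w.
  apply: complexI; rewrite !(rmorphD, rmorphM, rmorph_nat) /= -!sqmodE.
  by rewrite !rmorphD rmorphN /=; ring.
have := sqmod_ge0 (z - w); lra.
Qed.

Lemma sqmod_le0 z : sqmod z <= 0 -> z = 0.
Proof.
move=> le_z0; have z0 : sqmod z = 0 by apply/eqP; rewrite eq_le le_z0 sqmod_ge0.
have : z * z^* = 0 by rewrite sqmodE z0.
by move/eqP; rewrite mulf_eq0 conjC_eq0 orbb => /eqP.
Qed.

Lemma gt0_complex_real (e : C) : 0 < e -> exists2 e0 : R, 0 < e0 & e = e0%:C.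
Proof.
move=> e_gt0; rewrite (ge0_complex_real (ltW e_gt0)).
by exists (complex.Re e) => //; rewrite -ltcR -ge0_complex_real // ltW.
Qed.

Lemma vanishing_sqmod_unique (u : nat -> C) z w :
  vanishing (fun n => sqmod (z - u n)) -> vanishing (fun n => sqmod (w - u n)) ->
  z = w.
Proof.
move=> vz vw; apply/eqP; rewrite -subr_eq0; apply/eqP; apply: sqmod_le0.
apply: (vanishing_lb (vanishingZ (ler0n R 2) (vanishingD vz vw))) => n /=.
have -> : z - w = (z - u n) + - (w - u n) by ring.
by rewrite mulrDr; apply: le_trans (sqmodD_le _ _) _; rewrite sqmodN.
Qed.

End SquaredModulus.

Section HilbertSpace.
Variables (R : realType) (A : Type).
Local Notation C := R[i].
Variables (H : (A -> C) -> Prop) (ip : (A -> C) -> (A -> C) -> C).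
Hypothesis hH : hilbert_space H ip.
Implicit Types f g h u v : A -> C.

Lemma hilbert0 : H (@fzero R A). Proof. by case: hH => -[]. Qed.

Lemma hilbertD f g : H f -> H g -> H (fadd f g).
Proof. by case: hH => -[] _ + _ _; apply. Qed.

Lemma hilbertZ c f : H f -> H (fscale c f).
Proof. by case: hH => -[] _ _ + _; apply. Qed.

Lemma fsubE f g : fsub f g = fadd f (fscale (-1) g).
Proof. by apply: funext => a; rewrite /fsub /fadd /fscale mulN1r. Qed.

Lemma hilbertB f g : H f -> H g -> H (fsub f g).
Proof. by move=> Hf Hg; rewrite fsubE; apply: hilbertD => //; apply: hilbertZ. Qed.

Local Hint Resolve hilbert0 hilbertD hilbertZ hilbertB : core.

Lemma ip_linear c f g h : H f -> H g -> H h ->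
  ip (fadd (fscale c f) g) h = c * ip f h + ip g h.
Proof. by case: hH => _ [] [] + _ _ _ _; apply. Qed.

Lemma ipC f g : H f -> H g -> ip f g = (ip g f)^*.
Proof. by case: hH => _ [] [] _ + _ _ _; apply. Qed.

Lemma ip_ge0 f : H f -> 0 <= ip f f.
Proof. by case: hH => _ [] [] _ _ + _ _; apply. Qed.

Lemma ip0l h : H h -> ip (@fzero R A) h = 0.
Proof.
move=> Hh; have := ip_linear 1 hilbert0 hilbert0 Hh.
have -> : fadd (fscale 1 (@fzero R A)) (@fzero R A) = @fzero R A.
  by apply: funext => a; rewrite /fadd /fscale /fzero mulr0 addr0.
by rewrite mul1r => e; apply: (@addrI _ (ip (@fzero R A) h)); rewrite addr0 -e.
Qed.

Lemma ipZl c f h : H f -> H h -> ip (fscale c f) h = c * ip f h.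
Proof.
move=> Hf Hh; rewrite -[RHS]addr0 -(ip0l Hh) -ip_linear //.
by congr ip; apply: funext => a; rewrite /fadd /fzero addr0.
Qed.

Lemma ipDl f g h : H f -> H g -> H h -> ip (fadd f g) h = ip f h + ip g h.
Proof.
move=> Hf Hg Hh; rewrite -[ip f h]mul1r -ip_linear //.
by congr ip; apply: funext => a; rewrite /fadd /fscale mul1r.
Qed.

Lemma ipBl f g h : H f -> H g -> H h -> ip (fsub f g) h = ip f h - ip g h.
Proof. by move=> Hf Hg Hh; rewrite fsubE ipDl ?ipZl ?mulN1r; auto. Qed.

Lemma ipZr c f h : H f -> H h -> ip h (fscale c f) = c^* * ip h f.
Proof. by move=> Hf Hh; rewrite ipC ?ipZl // ?rmorphM /= -?ipC; auto. Qed.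

Lemma ipDr f g h : H f -> H g -> H h -> ip h (fadd f g) = ip h f + ip h g.
Proof. by move=> Hf Hg Hh; rewrite ipC ?ipDl // ?rmorphD /= -?ipC; auto. Qed.

Lemma ipBr f g h : H f -> H g -> H h -> ip h (fsub f g) = ip h f - ip h g.
Proof.
by move=> Hf Hg Hh; rewrite fsubE ipDr ?ipZr ?rmorphN1 ?mulN1r; auto.
Qed.

Definition sqnorm h : R := complex.Re (ip h h).

Lemma sqnormE h : H h -> ip h h = (sqnorm h)%:C.
Proof. by move=> Hh; apply: ge0_complex_real; apply: ip_ge0. Qed.

Lemma sqnorm_ge0 h : H h -> 0 <= sqnorm h.
Proof. by move=> Hh; rewrite -ler0c -sqnormE ?ip_ge0. Qed.

Lemma sqnormZ c h : H h -> sqnorm (fscale c h) = sqmod c * sqnorm h.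
Proof.
move=> Hh; have Hch : H (fscale c h) by auto.
apply: complexI; rewrite rmorphM /= -sqmodE -!sqnormE // ipZl // ipZr //; ring.
Qed.

Lemma sqnormB_sym f g : H f -> H g -> sqnorm (fsub f g) = sqnorm (fsub g f).
Proof.
move=> Hf Hg; have -> : fsub g f = fscale (-1) (fsub f g).
  by apply: funext => a; rewrite /fsub /fscale; ring.
have sqmodN1 : sqmod (-1 : C) = 1.
  by apply: complexI; rewrite -sqmodE rmorphN1 rmorph1 mulN1r opprK.
by rewrite sqnormZ ?sqmodN1 ?mul1r //; apply: hilbertB.
Qed.

Lemma parallelogram f g : H f -> H g ->
  sqnorm (fsub f g) + sqnorm (fadd f g) = 2 * sqnorm f + 2 * sqnorm g.
Proof.
move=> Hf Hg; have HfBg : H (fsub f g) by auto.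
have HfDg : H (fadd f g) by auto.
apply: complexI; rewrite !(rmorphD, rmorphM, rmorph_nat) /= -!sqnormE //.
by rewrite ipBl // !ipBr // ipDl // !ipDr //; ring.
Qed.

(* A quantitative Cauchy-Schwarz inequality; the [+ 1] spares a case split on
   [v = 0]. *)
Lemma cauchy_schwarz_gain u v : H u -> H v ->
  sqmod (ip u v) <= (sqnorm v + 1) *
     (sqnorm u - sqnorm (fsub u (fscale ((sqnorm v + 1)^-1%:C * ip u v) v))).
Proof.
move=> Hu Hv; set z := ip u v; set s := (sqnorm v + 1)^-1.
have Hsv : H (fscale (s%:C * z) v) by auto.
have Hw : H (fsub u (fscale (s%:C * z) v)) by auto.
have -> : sqnorm (fsub u (fscale (s%:C * z) v)) =
    sqnorm u - 2 * s * sqmod z + s * s * sqmod z * sqnorm v.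
  apply: complexI; rewrite -(sqnormE Hw) ipBl // !ipBr // !ipZl // !ipZr //.
  rewrite !(rmorphD, rmorphN, rmorphM, rmorph_nat) /= -sqmodE -!sqnormE //.
  by rewrite conj_Creal ?complex_real // -/z (ipC Hv Hu) -/z; ring.
have v_ge0 := sqnorm_ge0 Hv; have z_ge0 := sqmod_ge0 z.
have sK : s * (sqnorm v + 1) = 1 by rewrite mulVf // gt_eqF // ltr_wpDl.
have s_ge0 : 0 <= s by rewrite invr_ge0; lra.
have sv : s * sqnorm v = 1 - s by rewrite -sK; ring.
rewrite (_ : _ * _ = 2 * sqmod z * (s * (sqnorm v + 1)) -
                     sqmod z * (s * sqnorm v) * (s * (sqnorm v + 1))); last by ring.
rewrite sK sv; have := mulr_ge0 z_ge0 s_ge0; lra.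
Qed.

Lemma sqmod_ip_le u v : H u -> H v -> sqmod (ip u v) <= (sqnorm v + 1) * sqnorm u.
Proof.
move=> Hu Hv; apply: le_trans (cauchy_schwarz_gain Hu Hv) _.
have v1_ge0 : 0 <= sqnorm v + 1 by rewrite addr_ge0 ?sqnorm_ge0.
by rewrite ler_wpM2l // lerBlDr lerDl sqnorm_ge0 //; apply: hilbertB => //; apply: hilbertZ.
Qed.

Lemma sqmod_ip_le_sym u v : H u -> H v -> sqmod (ip u v) <= (sqnorm u + 1) * sqnorm v.
Proof. by move=> Hu Hv; rewrite ipC // sqmod_conj sqmod_ip_le. Qed.

Lemma hilbert_complete (u : nat -> A -> C) (x : nat -> R) :
  (forall n, H (u n)) -> vanishing x ->
  (forall n k, sqnorm (fsub (u n) (u k)) <= x n + x k) ->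
  exists2 p, H p & vanishing (fun n => sqnorm (fsub p (u n))).
Proof.
move=> Hu vx cauchy; case: hH => _ [] _ /(_ u Hu) [].
  move=> e /gt0_complex_real [e0 e0_gt0 ->].
  have [N hN] := vx _ (divr_gt0 e0_gt0 (ltr0n R 2)); exists N => m n le_Nm le_Nn.
  rewrite sqnormE ?ltcR; last exact: hilbertB.
  by have := cauchy m n; have := hN _ le_Nm; have := hN _ le_Nn; lra.
move=> p [Hp cvg_p]; exists p => // e e_gt0.
have [|N hN] := cvg_p e%:C; first by rewrite ltcR.
exists N => n /hN; have Hun : H (fsub (u n) p) by apply: hilbertB.
by rewrite (sqnormE Hun) ltcR sqnormB_sym.
Qed.

End HilbertSpace.

Section ReproducingKernel.
Variables (R : realType) (A : Type).
Local Notation C := R[i].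
Variables (K : A -> A -> C) (H : (A -> C) -> Prop) (ip : (A -> C) -> (A -> C) -> C).
Hypothesis rk : is_rkhs K H ip.
Local Notation Kv a := (fun b => K b a).

Lemma rkhs_hilbert : hilbert_space H ip. Proof. by case: rk. Qed.

Lemma rkhs_kernel a : H (Kv a). Proof. by case: rk. Qed.

Lemma rkhs_eval f a : H f -> f a = ip f (Kv a).
Proof. by case: rk => _ _; apply. Qed.

Lemma sqmod_eval_le f a : H f -> sqmod (f a) <= (sqnorm ip (Kv a) + 1) * sqnorm ip f.
Proof.
move=> Hf; rewrite (rkhs_eval a Hf).
by have := sqmod_ip_le rkhs_hilbert Hf (rkhs_kernel a).
Qed.

Lemma vanishing_eval (u : nat -> A -> C) p a : H p -> (forall n, H (u n)) ->
  vanishing (fun n => sqnorm ip (fsub p (u n))) ->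
  vanishing (fun n => sqmod (p a - u n a)).
Proof.
move=> Hp Hu vp; have Ka_ge0 := sqnorm_ge0 rkhs_hilbert (rkhs_kernel a).
have Ka1_ge0 : 0 <= sqnorm ip (Kv a) + 1 by rewrite addr_ge0.
apply: (vanishing_le (vanishingZ Ka1_ge0 vp)) => n.
by have := sqmod_eval_le a (hilbertB rkhs_hilbert Hp (Hu n)).
Qed.

End ReproducingKernel.

Section RkhsUniqueness.
Variables (R : realType) (A : Type).
Local Notation C := R[i].
Variable K : A -> A -> C.
Variables (H1 H2 : (A -> C) -> Prop) (ip1 ip2 : (A -> C) -> (A -> C) -> C).
Hypotheses (rk1 : is_rkhs K H1 ip1) (rk2 : is_rkhs K H2 ip2).
Local Notation Kv a := (fun b => K b a).

Let hs1 : hilbert_space H1 ip1 := rkhs_hilbert rk1.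
Let hs2 : hilbert_space H2 ip2 := rkhs_hilbert rk2.

Definition compatible m := [/\ H1 m, H2 m & forall h, H1 h -> H2 h -> ip1 h m = ip2 h m].

Lemma compatible_kernel a : compatible (Kv a).
Proof.
split; [exact: (rkhs_kernel rk1 a) | exact: (rkhs_kernel rk2 a) |].
by move=> h H1h H2h; rewrite -(rkhs_eval rk1) // -(rkhs_eval rk2).
Qed.

Lemma compatible0 : compatible (@fzero R A).
Proof.
have [H1_0 H2_0] := (hilbert0 hs1, hilbert0 hs2).
split=> // h H1h H2h.
by rewrite (ipC hs1) // (ipC hs2) // (ip0l hs1) // (ip0l hs2).
Qed.

Lemma compatible_linear c u v : compatible u -> compatible v ->
  compatible (fadd (fscale c u) v).
Proof.
move=> [H1u H2u ip_u] [H1v H2v ip_v].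
have [H1cu H2cu] := (hilbertZ hs1 c H1u, hilbertZ hs2 c H2u).
split; [exact: (hilbertD hs1 H1cu H1v) | exact: (hilbertD hs2 H2cu H2v) |].
move=> h H1h H2h.
by rewrite (ipDr hs1) // (ipDr hs2) // (ipZr hs1) // (ipZr hs2) // ip_u // ip_v.
Qed.

Lemma compatibleZ c u : compatible u -> compatible (fscale c u).
Proof.
move=> cu; have -> : fscale c u = fadd (fscale c u) (@fzero R A).
  by apply: funext => a; rewrite /fadd /fzero addr0.
exact: (compatible_linear c cu compatible0).
Qed.

Lemma compatibleB u v : compatible u -> compatible v -> compatible (fsub u v).
Proof.
move=> cu cv; have -> : fsub u v = fadd (fscale (-1) v) u.
  by apply: funext => a; rewrite /fsub /fadd /fscale; ring.
exact: compatible_linear.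
Qed.

Lemma compatible_sqnorm m : compatible m -> sqnorm ip1 m = sqnorm ip2 m.
Proof. by case=> H1m H2m ip_m; rewrite /sqnorm ip_m. Qed.

Lemma compatible_minimizing f : H1 f ->
  exists2 d, (forall m, compatible m -> d <= sqnorm ip1 (fsub f m)) &
  exists ms, forall n, compatible (ms n) /\ sqnorm ip1 (fsub f (ms n)) < d + n.+1%:R^-1.
Proof.
move=> H1f.
pose S : set R := [set x | exists2 m, compatible m & x = sqnorm ip1 (fsub f m)]%classic.
have S_lb : has_lbound S.
  by exists 0 => _ [m [H1m _ _] ->]; exact: (sqnorm_ge0 hs1 (hilbertB hs1 H1f H1m)).
have S_inf : has_inf S.
  split => //; exists (sqnorm ip1 (fsub f (@fzero R A))), (@fzero R A) => //.
  exact: compatible0.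
exists (inf S) => [m cm|]; first by apply: (ge_inf S_lb); exists m.
have near_inf n : exists m, compatible m /\ sqnorm ip1 (fsub f m) < inf S + n.+1%:R^-1.
  have inv_gt0 : 0 < n.+1%:R^-1 :> R by rewrite invr_gt0 ltr0n.
  by have [_ [m cm ->] lt_m] := inf_adherent inv_gt0 S_inf; exists m.
by have [ms ms_min] := choice near_inf; exists ms.
Qed.

Section MinimizingSequence.
Variables (f : A -> C) (d : R) (ms : nat -> A -> C).
Hypotheses (H1f : H1 f) (d_lb : forall m, compatible m -> d <= sqnorm ip1 (fsub f m)).
Hypothesis ms_min : forall n, compatible (ms n) /\ sqnorm ip1 (fsub f (ms n)) < d + n.+1%:R^-1.

Let ms_compatible n : compatible (ms n). Proof. by case: (ms_min n). Qed.
Let H1ms n : H1 (ms n). Proof. by case: (ms_compatible n). Qed.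
Let H2ms n : H2 (ms n). Proof. by case: (ms_compatible n). Qed.
Let H1f_ms n : H1 (fsub f (ms n)). Proof. exact: (hilbertB hs1 H1f (H1ms n)). Qed.

(* The midpoint of [ms n] and [ms k] is compatible, so it is at distance at
   least [d] from [f]; the parallelogram law then bounds [|ms n - ms k|^2]. *)
Lemma minimizing_cauchy n k :
  sqnorm ip1 (fsub (ms n) (ms k)) <= 2 * n.+1%:R^-1 + 2 * k.+1%:R^-1.
Proof.
pose mid := fadd (fscale 2^-1 (ms n)) (fscale 2^-1 (ms k)).
have c_mid : compatible mid.
  exact: (compatible_linear _ (ms_compatible n) (compatibleZ _ (ms_compatible k))).
have H1mid : H1 mid by case: c_mid.
have := parallelogram hs1 (H1f_ms k) (H1f_ms n).
have -> : fsub (fsub f (ms k)) (fsub f (ms n)) = fsub (ms n) (ms k).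
  by apply: funext => a; rewrite /fsub; ring.
have -> : fadd (fsub f (ms k)) (fsub f (ms n)) = fscale 2 (fsub f mid).
  apply: funext => a; rewrite /mid /fsub /fadd /fscale.
  have twoK : (2 : C) * 2^-1 = 1 by rewrite mulfV // pnatr_eq0.
  by rewrite mulrBr mulrDr !mulrA twoK !mul1r; ring.
rewrite (sqnormZ hs1 _ (hilbertB hs1 H1f H1mid)).
have -> : sqmod (2 : C) = 4.
  by apply: complexI; rewrite -sqmodE conj_Creal ?realn // rmorph_nat; ring.
have := d_lb c_mid; have [_ +] := ms_min n; have [_ +] := ms_min k.
set p := n.+1%:R^-1; set q := k.+1%:R^-1; lra.
Qed.

(* [ms n + t K_a] is compatible for every [t], so no multiple of [K_a] can
   bring [f - ms n] much closer to [0]: by [cauchy_schwarz_gain],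
   [<f - ms n, K_a> = f a - ms n a] is small. *)
Lemma minimizing_eval a : vanishing (fun n => sqmod (f a - ms n a)).
Proof.
have H1Ka : H1 (Kv a) := rkhs_kernel rk1 a.
have Ka1_ge0 : 0 <= sqnorm ip1 (Kv a) + 1 by rewrite addr_ge0 ?(sqnorm_ge0 hs1).
apply: (vanishing_le (vanishingZ Ka1_ge0 vanishing_inv)) => n.
rewrite -/(fsub f (ms n) a) (rkhs_eval rk1 a (H1f_ms n)).
apply: le_trans (cauchy_schwarz_gain hs1 (H1f_ms n) H1Ka) _.
rewrite ler_wpM2l //; set t := (X in fscale X).
have c_shift : compatible (fadd (fscale t (Kv a)) (ms n)).
  exact: (compatible_linear _ (compatible_kernel a) (ms_compatible n)).
have -> : fsub (fsub f (ms n)) (fscale t (Kv a)) = fsub f (fadd (fscale t (Kv a)) (ms n)).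
  by apply: funext => b; rewrite /fsub /fadd /fscale; ring.
by have := d_lb c_shift; have [_ +] := ms_min n; set p := n.+1%:R^-1; lra.
Qed.

Lemma minimizing_cvg : H2 f /\
  vanishing (fun n => sqnorm ip1 (fsub f (ms n))) /\
  vanishing (fun n => sqnorm ip2 (fsub f (ms n))).
Proof.
have v2inv : vanishing (fun n => 2 * n.+1%:R^-1 :> R).
  exact: (vanishingZ (ler0n R 2) vanishing_inv).
have [p H1p vp] := hilbert_complete hs1 H1ms v2inv minimizing_cauchy.
have cauchy2 n k : sqnorm ip2 (fsub (ms n) (ms k)) <= 2 * n.+1%:R^-1 + 2 * k.+1%:R^-1.
  by rewrite -compatible_sqnorm ?minimizing_cauchy //; apply: compatibleB.
have [g H2g vg] := hilbert_complete hs2 H2ms v2inv cauchy2.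
have fp : f = p.
  apply: funext => a; apply: (vanishing_sqmod_unique (minimizing_eval a)).
  exact: (vanishing_eval rk1 a H1p H1ms vp).
have fg : f = g.
  apply: funext => a; apply: (vanishing_sqmod_unique (minimizing_eval a)).
  exact: (vanishing_eval rk2 a H2g H2ms vg).
by split; [rewrite fg | split; [rewrite fp | rewrite fg]].
Qed.

End MinimizingSequence.

Lemma compatible_approx f : H1 f -> H2 f /\ exists ms, (forall n, compatible (ms n)) /\
  vanishing (fun n => sqnorm ip1 (fsub f (ms n))) /\
  vanishing (fun n => sqnorm ip2 (fsub f (ms n))).
Proof.
move=> H1f; have [d d_lb [ms ms_min]] := compatible_minimizing H1f.
have [H2f [v1 v2]] := minimizing_cvg H1f d_lb ms_min.
by split => //; exists ms; split => // n; case: (ms_min n).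
Qed.

Lemma rkhs_sub f : H1 f -> H2 f.
Proof. by case/compatible_approx. Qed.

Lemma rkhs_ip_eq f g : H1 f -> H1 g -> ip1 f g = ip2 f g.
Proof.
move=> H1f H1g; have H2f := rkhs_sub H1f.
have [H2g [ms [c_ms [v1 v2]]]] := compatible_approx H1g.
have f1_ge0 : 0 <= sqnorm ip1 f + 1 by rewrite addr_ge0 ?(sqnorm_ge0 hs1).
have f2_ge0 : 0 <= sqnorm ip2 f + 1 by rewrite addr_ge0 ?(sqnorm_ge0 hs2).
apply: (vanishing_sqmod_unique (u := fun n => ip1 f (ms n))).
  apply: (vanishing_le (vanishingZ f1_ge0 v1)) => n; case: (c_ms n) => H1ms _ _.
  rewrite -(ipBr hs1) //; exact: (sqmod_ip_le_sym hs1 H1f (hilbertB hs1 H1g H1ms)).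
apply: (vanishing_le (vanishingZ f2_ge0 v2)) => n; case: (c_ms n) => H1ms H2ms -> //.
rewrite -(ipBr hs2) //; exact: (sqmod_ip_le_sym hs2 H2f (hilbertB hs2 H2g H2ms)).
Qed.

End RkhsUniqueness.

Section Pullback.
Variables (R : realType) (A B : Type).
Local Notation C := R[i].
Variables (phi : B -> A) (psi : A -> B).
Hypotheses (phiK : cancel phi psi) (psiK : cancel psi phi).

Lemma comp_cancel (f : A -> C) : f \o phi \o psi = f.
Proof. by apply: funext => a /=; rewrite psiK. Qed.

Lemma rkhs_pullback (K : A -> A -> C) H ip : is_rkhs K H ip ->
  is_rkhs (fun b b' => K (phi b) (phi b')) (fun h => H (h \o psi))
          (fun h h' => ip (h \o psi) (h' \o psi)).
Proof.
move=> [[[H0 HD HZ] [[ip_lin ipC ip_ge0 ip_eq0] complete]] HK eval].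
split; [split; [|split; [|]] | |].
- by split=> [|f g|c f]; [apply: H0 | apply: HD | apply: HZ].
- split=> [c f g h|f g|f|f Hf /(ip_eq0 _ Hf) f0]; [exact: ip_lin | exact: ipC | exact: ip_ge0 |].
  by apply: funext => b; rewrite -(phiK b); apply: (congr1 (fun F => F (phi b)) f0).
- move=> u Hu /(complete _ Hu) [g [Hg cvg_g]]; exists (g \o phi).
  have sub_comp n : fsub (u n) (g \o phi) \o psi = fsub (u n \o psi) g.
    by apply: funext => a /=; rewrite /fsub /= psiK.
  split=> [|e /cvg_g [N hN]]; first by rewrite comp_cancel.
  by exists N => n /hN; rewrite /= sub_comp.
- by move=> b; rewrite /= (comp_cancel (fun a => K a (phi b))).
- by move=> h b Hh; rewrite (comp_cancel (fun a => K a (phi b))) -eval /= ?phiK.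
Qed.

Lemma comp_unitary (K1 : A -> A -> C) H1 ip1 (K2 : B -> B -> C) H2 ip2 :
  is_rkhs K1 H1 ip1 -> is_rkhs K2 H2 ip2 ->
  (forall b b', K2 b b' = K1 (phi b) (phi b')) ->
  unitary H1 ip1 H2 ip2 (fun f => f \o phi).
Proof.
move=> rk1 rk2 K12.
have rk : is_rkhs K2 (fun h => H1 (h \o psi)) (fun h h' => ip1 (h \o psi) (h' \o psi)).
  have -> : K2 = (fun b b' => K1 (phi b) (phi b')).
    by apply: funext => b; apply: funext => b'; apply: K12.
  exact: rkhs_pullback.
split=> //.
- by move=> f Hf; apply: (rkhs_sub rk rk2); rewrite /= comp_cancel.
- move=> f g Hf Hg; rewrite -(rkhs_ip_eq rk rk2) /= ?comp_cancel //.
- move=> h /(rkhs_sub rk2 rk) Hh; exists (h \o psi) => //.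
  by apply: funext => b /=; rewrite phiK.
Qed.

End Pullback.

Lemma unitary_eq_comp (R : realType) (A B : Type) (K1 : A -> A -> R[i]) H1 ip1
    (K2 : B -> B -> R[i]) H2 ip2 (phi : B -> A) (V : (A -> R[i]) -> B -> R[i]) :
  is_rkhs K1 H1 ip1 -> is_rkhs K2 H2 ip2 -> unitary H1 ip1 H2 ip2 V ->
  (forall b, V (fun a => K1 a (phi b)) = (fun b' => K2 b' b)) ->
  forall f, H1 f -> V f = f \o phi.
Proof.
move=> rk1 rk2 [V_H _ V_ip _] VK f Hf; apply: funext => b /=.
rewrite (rkhs_eval rk2 b (V_H f Hf)) -VK V_ip //; last exact: (rkhs_kernel rk1).
by rewrite -(rkhs_eval rk1).
Qed.

Section GroupoidTranslation.
Variable G : groupoid.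
Implicit Types g a b c : gel G.

Lemma fiber_inj (x : gob G) (a b : fiber x) : proj1_sig a = proj1_sig b -> a = b.
Proof. by case: a b => [a ha] [b hb] /=; apply: eq_exist. Qed.

Lemma gmulK g b : gr b = gs g -> gmul (ginv g) (gmul g b) = b.
Proof. by move=> hb; rewrite gmulA ?gs_inv // gmulVg -hb geps_mull. Qed.

Lemma gmulKV g a : gr a = gr g -> gmul g (gmul (ginv g) a) = a.
Proof. by move=> ha; rewrite gmulA ?gr_inv ?gs_inv // gmulgV -ha geps_mull. Qed.

Lemma ginvM g1 g2 : gr g2 = gs g1 -> ginv (gmul g1 g2) = gmul (ginv g2) (ginv g1).
Proof.
move=> h; set w := gmul (ginv g2) (ginv g1).
have hw : gr w = gs g2 by rewrite gr_mul gr_inv // gs_inv h.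
have hkw : gmul (gmul g1 g2) w = geps (gr (gmul g1 g2)).
  by rewrite -gmulA ?hw // gmulKV ?gr_inv // gmulgV gr_mul.
by rewrite -[LHS]geps_mulr gs_inv -hkw gmulK // gs_mul.
Qed.

Definition fmulV g (a : fiber (gr g)) : fiber (gs g) :=
  exist _ (gmul (ginv g) (proj1_sig a))
    (etrans (gr_mul (etrans (proj2_sig a) (esym (gs_inv g)))) (gr_inv g)).

Lemma fmulK g : cancel (@fmul G g) (@fmulV g).
Proof. by move=> b; apply: fiber_inj; rewrite /= gmulK //; case: b. Qed.

Lemma fmulVK g : cancel (@fmulV g) (@fmul G g).
Proof. by move=> a; apply: fiber_inj; rewrite /= gmulKV //; case: a. Qed.

Lemma fmul_feps g : fmul (feps (gs g)) = exist _ g erefl.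
Proof. by apply: fiber_inj; rewrite /= geps_mulr. Qed.

Lemma ftrE (T : Type) (x y : gob G) (e : x = y) (f : fiber x -> T) (b : fiber y) :
  ftr e f b = f (exist _ (proj1_sig b) (etrans (proj2_sig b) (esym e))).
Proof. by subst y; case: b. Qed.

Definition translate (T : Type) g (f : fiber (gs g) -> T) : fiber (gr g) -> T :=
  f \o fmulV (g := g).

Lemma translate_mul (T : Type) g1 g2 (h : gr g2 = gs g1) (f : fiber (gs g2) -> T) :
  translate (ftr (gs_mul_sym h) f) = ftr (gr_mul_sym h) (translate (ftr h (translate f))).
Proof.
apply: funext => a; rewrite /translate /= (ftrE (gs_mul_sym h) f) (ftrE (gr_mul_sym h)) /= (ftrE h).
congr f; apply: fiber_inj => /=.
have ha : gr (proj1_sig a) = gr g1 by rewrite (proj2_sig a) gr_mul.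
by rewrite ginvM // -gmulA ?gr_inv ?gs_inv ?ha.
Qed.

End GroupoidTranslation.

Section InvariantKernel.
Variables (R : realType) (G : groupoid) (K : gel G -> gel G -> R[i]).
Hypothesis K_inv : forall g c : gel G, gr g = gr c ->
  K c g = K (gmul (ginv g) c) (geps (gr (gmul (ginv g) c))).

(* Both sides equal [K ((g c)^-1 a) eps] by [K_inv], since
   [(g c)^-1 a = c^-1 (g^-1 a)]. *)
Lemma K_ginv_mul (g a c : gel G) : gr a = gr g -> gr c = gs g ->
  K (gmul (ginv g) a) c = K a (gmul g c).
Proof.
move=> ha hc.
have hga : gr (gmul (ginv g) a) = gs g by rewrite gr_mul ?gr_inv // gs_inv.
rewrite (@K_inv c (gmul (ginv g) a)); last by rewrite hga.
rewrite (@K_inv (gmul g c) a); last by rewrite gr_mul.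
by rewrite ginvM // -gmulA ?gr_inv ?gs_inv.
Qed.

Lemma Kres_fmulV (g : gel G) (b b' : fiber (gr g)) :
  Kres K (gr g) b b' = Kres K (gs g) (fmulV b) (fmulV b').
Proof.
case: b b' => [b hb] [b' hb']; rewrite /Kres /= K_ginv_mul ?gmulKV //.
by rewrite gr_mul ?gr_inv // gs_inv.
Qed.

Lemma translate_Kvec (g : gel G) (c : fiber (gs g)) :
  translate (Kvec K c) = Kvec K (fmul c).
Proof.
apply: funext => -[a ha]; case: c => [c hc].
by rewrite /translate /Kvec /Kres /= K_ginv_mul.
Qed.

Lemma ftr_Kvec (x y : gob G) (e : x = y) (c : fiber x) :
  ftr e (Kvec K c) = Kvec K (exist _ (proj1_sig c) (etrans (proj2_sig c) e) : fiber y).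
Proof. by subst y. Qed.

End InvariantKernel.

Section TranslationRepresentation.
Local Unset Implicit Arguments.
Context {R : realType} {G : groupoid} {K : gel G -> gel G -> R[i]}.
Hypothesis K_inv : forall g c : gel G, gr g = gr c ->
  K c g = K (gmul (ginv g) c) (geps (gr (gmul (ginv g) c))).
Context {H : forall x : gob G, (fiber x -> R[i]) -> Prop}
        {ip : forall x : gob G, (fiber x -> R[i]) -> (fiber x -> R[i]) -> R[i]}.
Hypothesis rk : forall x : gob G, is_rkhs (Kres K x) (H x) (ip x).

Lemma translate_unitary (g : gel G) :
  unitary (H (gs g)) (ip (gs g)) (H (gr g)) (ip (gr g)) (@translate G R[i] g).
Proof.
exact: (comp_unitary (@fmulVK G g) (@fmulK G g) (rk _) (rk _) (Kres_fmulV K_inv (g := g))).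
Qed.

Lemma translate_unique (g : gel G) (V : (fiber (gs g) -> R[i]) -> fiber (gr g) -> R[i]) :
  unitary (H (gs g)) (ip (gs g)) (H (gr g)) (ip (gr g)) V ->
  (forall c : fiber (gs g), V (Kvec K c) = Kvec K (fmul c)) ->
  forall f, H (gs g) f -> V f = translate f.
Proof.
move=> V_unitary VK f Hf; apply: (unitary_eq_comp (rk _) (rk _) V_unitary _ Hf) => b.
by rewrite VK fmulVK.
Qed.

End TranslationRepresentation.

Theorem mainTheorem3 (R : realType) (G : groupoid) (K : gel G -> gel G -> R[i])
  (H : forall x : gob G, (fiber x -> R[i]) -> Prop)
  (ip : forall x : gob G, (fiber x -> R[i]) -> (fiber x -> R[i]) -> R[i]) :
  pos_def_kernel K ->
  (forall g c : gel G, gr g <> gr c -> K g c = 0) ->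
  (forall g c : gel G, gr g = gr c ->
     K c g = K (gmul (ginv g) c) (geps (gr (gmul (ginv g) c)))) ->
  (forall x : gob G, is_rkhs (Kres K x) (H x) (ip x)) ->
  exists U : forall g : gel G, (fiber (gs g) -> R[i]) -> (fiber (gr g) -> R[i]),
    [/\ (* U(g) is a unitary with U(g) K_chi = K_{g chi} *)
        (forall g : gel G,
           unitary (H (gs g)) (ip (gs g)) (H (gr g)) (ip (gr g)) (U g) /\
           (forall c : fiber (gs g), U g (Kvec K c) = Kvec K (fmul c))),
        (* ... and it is the unique such unitary *)
        (forall (g : gel G) (V : (fiber (gs g) -> R[i]) -> (fiber (gr g) -> R[i])),
           unitary (H (gs g)) (ip (gs g)) (H (gr g)) (ip (gr g)) V ->
           (forall c : fiber (gs g), V (Kvec K c) = Kvec K (fmul c)) ->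
           forall f, H (gs g) f -> V f = U g f),
        (* (U, {H(K^x)}) is a unitary representation:
           U(g1 g2) = U(g1) U(g2) whenever r g2 = s g1 *)
        (forall (g1 g2 : gel G) (h : gr g2 = gs g1) (f : fiber (gs g2) -> R[i]),
           H (gs g2) f ->
           U (gmul g1 g2) (ftr (gs_mul_sym h) f)
           = ftr (gr_mul_sym h) (U g1 (ftr h (U g2 f)))) &
        (* K(chi, g) = < U(g) v(s g), U(chi) v(s chi) > with v(x) = K_{eps(x)} *)
        (forall (g c : gel G) (e : gr c = gr g),
           K c g = ip (gr g) (U g (Kvec K (feps (gs g))))
                             (ftr e (U c (Kvec K (feps (gs c))))))].
Proof.
move=> _ _ K_inv rk; exists (@translate G R[i]); split.
- by move=> g; split; [exact: (translate_unitary K_inv rk) | exact: translate_Kvec].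
- exact: (translate_unique rk).
- by move=> g1 g2 h f _; apply: translate_mul.
- move=> g c e; rewrite !(translate_Kvec K_inv) !fmul_feps ftr_Kvec.
  by rewrite -(rkhs_eval (rk _)) //; exact: (rkhs_kernel (rk _)).
Qed.
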